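(* Let $a,b,c,d\in\mathbb{R}$, let $F(q_1,q_2)=aq_1^3+bq_1^2q_2+cq_1q_2^2+dq_2^3$, and let $L=\{(q,\nabla F(q)):q\in\mathbb{R}^2\}\subset\mathbb{R}^4$. Consider the map $\Psi:\mathbb{R}^2\times\mathbb{R}^2\to\mathbb{R}^4$, $\Psi(q,w)=(q+w,\nabla F(q)+\nabla^2F(q)w)$ (i.e. $\Psi(X,W)=X+W$ on $TL$), let $\Delta$ be its set of critical points and $\Sigma=\Psi(\Delta)$. The following are equivalent: (i) $18abcd+b^2c^2>4ac^3+4b^3d+27a^2d^2$; (ii) $\Delta$ equals the zero section $\{w=0\}$ (and then, in particular, $\Sigma=L$); (iii) every regular value of $\Psi$ has multiplicity $2$. Moreover, the opposite inequality $18abcd+b^2c^2<4ac^3+4b^3d+27a^2d^2$ is equivalent to the multiplicity of $\Psi$ (at regular values) being $0$ and $4$; in this case $\Delta$ is not equal to the zero section.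
   Context: $\mathbb{R}^4$ has coordinates $(q_1,q_2,p_1,p_2)$ and symplectic form $\sum_i dp_i\wedge dq_i$; $L$ is a Lagrangian submanifold, and $TL$ is identified with $\mathbb{R}^2\times\mathbb{R}^2$ via $(q,w)\mapsto$ the tangent vector $(w,\nabla^2F(q)w)$ at $(q,\nabla F(q))$, where $\nabla^2F(q)$ is the Hessian. The image of $\Psi$ is where the outer symplectic billiard correspondence of $L$ is defined. The multiplicity of a regular value is its number of preimages under $\Psi$. *)

From HB Require Import structures.
From mathcomp Require Import all_boot all_order all_algebra.
From mathcomp Require Import all_classical all_reals all_analysis.
Set Implicit Arguments. Unset Strict Implicit. Unset Printing Implicit Defensive.
Import Order.TTheory GRing.Theory Num.Theory.
Import numFieldNormedType.Exports.
Local Open Scope classical_set_scope.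
Local Open Scope ring_scope.

Section Defs.
Variable R : realType.

Definition i0 : 'I_4 := @Ordinal 4 0 isT.
Definition i1 : 'I_4 := @Ordinal 4 1 isT.
Definition i2 : 'I_4 := @Ordinal 4 2 isT.
Definition i3 : 'I_4 := @Ordinal 4 3 isT.

Definition vec4 (x1 x2 x3 x4 : R) : 'rV[R]_4 :=
  \row_(i < 4) nth 0 [:: x1; x2; x3; x4] i.

Definition cubicF (a b c d q1 q2 : R) : R :=
  a * q1 ^+ 3 + b * q1 ^+ 2 * q2 + c * q1 * q2 ^+ 2 + d * q2 ^+ 3.

Definition gradF1 (a b c d q1 q2 : R) : R :=
  3%:R * a * q1 ^+ 2 + 2%:R * b * q1 * q2 + c * q2 ^+ 2.
Definition gradF2 (a b c d q1 q2 : R) : R :=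
  b * q1 ^+ 2 + 2%:R * c * q1 * q2 + 3%:R * d * q2 ^+ 2.

Definition hessF11 (a b c d q1 q2 : R) : R := 6%:R * a * q1 + 2%:R * b * q2.
Definition hessF12 (a b c d q1 q2 : R) : R := 2%:R * b * q1 + 2%:R * c * q2.
Definition hessF22 (a b c d q1 q2 : R) : R := 2%:R * c * q1 + 6%:R * d * q2.

Definition lagL (a b c d : R) : set 'rV[R]_4 :=
  [set vec4 q1 q2 (gradF1 a b c d q1 q2) (gradF2 a b c d q1 q2) | q1 in setT & q2 in setT].

(* Psi(q, w) = (q + w, grad F(q) + Hess F(q) w);
   a point of R^2 x R^2 is encoded as (q1, q2, w1, w2) in R^4. *)
Definition Psi (a b c d : R) (x : 'rV[R]_4) : 'rV[R]_4 :=
  let q1 := x 0 i0 in let q2 := x 0 i1 in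
  let w1 := x 0 i2 in let w2 := x 0 i3 in
  vec4 (q1 + w1) (q2 + w2)
    (gradF1 a b c d q1 q2 + hessF11 a b c d q1 q2 * w1 + hessF12 a b c d q1 q2 * w2)
    (gradF2 a b c d q1 q2 + hessF12 a b c d q1 q2 * w1 + hessF22 a b c d q1 q2 * w2).

Definition jacobian (f : 'rV[R]_4 -> 'rV[R]_4) (x : 'rV[R]_4) : 'M[R]_4 :=
  \matrix_(i < 4, j < 4) ('D_(delta_mx 0 j) f x) 0 i.

Definition critical_point (f : 'rV[R]_4 -> 'rV[R]_4) (x : 'rV[R]_4) : Prop :=
  \det (jacobian f x) = 0.

Definition critical_set (f : 'rV[R]_4 -> 'rV[R]_4) : set 'rV[R]_4 :=
  [set x | critical_point f x].

(* y is a regular value of f: no preimage of y is a critical point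
   (values not attained are regular values, of multiplicity 0). *)
Definition regular_value (f : 'rV[R]_4 -> 'rV[R]_4) (y : 'rV[R]_4) : Prop :=
  forall x, f x = y -> ~ critical_point f x.

Definition has_multiplicity (f : 'rV[R]_4 -> 'rV[R]_4) (y : 'rV[R]_4) (n : nat) : Prop :=
  exists s : seq 'rV[R]_4, [/\ uniq s, size s = n & forall x, f x = y <-> x \in s].

Definition regular_multiplicities (f : 'rV[R]_4 -> 'rV[R]_4) : set nat :=
  [set n | exists y, regular_value f y /\ has_multiplicity f y n].

Definition zero_section : set 'rV[R]_4 := [set x | x 0 i2 = 0 /\ x 0 i3 = 0].

End Defs.

From Pilot Require Import Defs.
From HB Require Import structures.
From mathcomp Require Import all_boot all_order all_algebra.
From mathcomp Require Import all_classical all_reals all_analysis.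
From mathcomp Require Import ring lra.
Import Order.TTheory GRing.Theory Num.Theory.
Import numFieldNormedType.Exports.
Local Open Scope classical_set_scope.
Local Open Scope ring_scope.
Set Implicit Arguments. Unset Strict Implicit. Unset Printing Implicit Defensive.

(* Because F is cubic,
   gradF q + hessF q w = gradF (q + w) - gradF w, so Psi (q, w) = y exactly when
   q = y_q - w and gradF w = gradF y_q - y_p: the fibres of Psi are those of the
   homogeneous quadratic map gradF, and the Jacobian determinant of Psi at (q, w)
   is det hessF w = 4 H w, where H is the Hessian form of F, of discriminant -3 D
   with D = lhs - rhs.  For v <> 0 the equation gradF w = v splits into
   k_v w = 0 (gradF w lies on the line of v) and l_v w = |v|^2, where
   disc k_v = -4 H (-v2, v1) > 0 over a regular value: H is negative definite
   when D > 0, and H (-v2, v1) = - (H w)^2 when v = gradF w.  Then k_v is a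
   product of two lines, each carrying 0 or 2 solutions according to the sign
   of l_v on it, and the product of these two values of l_v is the resultant of
   k_v and l_v, namely -3 D |v|^4.  Hence D > 0 gives exactly 2 preimages over
   each regular value and D < 0 gives 0 or 4, while for D <= 0 an isotropic
   vector u of H makes w |-> <u, gradF w> semidefinite, so that u or -u is not
   a value of gradF. *)

Section Enumerates.
Variable T : eqType.

Definition enumerates (P : T -> Prop) (s : seq T) := uniq s /\ forall x, P x <-> x \in s.

Lemma enumerates_size (P : T -> Prop) s t :
  enumerates P s -> enumerates P t -> size s = size t.
Proof.
move=> [us Ps] [ut Pt]; apply: perm_size; apply: uniq_perm => // x.
by apply/idP/idP => [/Ps /Pt | /Pt /Ps].
Qed.

End Enumerates.

Section BinaryQuadraticForms.
Variable R : rcfType.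
Implicit Types (w : R * R).

Definition qform (m1 m2 m3 : R) w := m1 * w.1 ^+ 2 + m2 * w.1 * w.2 + m3 * w.2 ^+ 2.
Definition qdisc (m1 m2 m3 : R) := m2 ^+ 2 - 4%:R * m1 * m3.
Definition qresultant (m1 m2 m3 n1 n2 n3 : R) :=
  (m1 * n3 - m3 * n1) ^+ 2 - (m1 * n2 - m2 * n1) * (m2 * n3 - m3 * n2).

Lemma qform0 (m1 m2 m3 : R) : qform m1 m2 m3 (0, 0) = 0.
Proof. by rewrite /qform /= !(expr0n, mulr0) !addr0. Qed.

Lemma qform_square m1 m2 m3 w : 4%:R * m1 * qform m1 m2 m3 w =
  (2%:R * m1 * w.1 + m2 * w.2) ^+ 2 - qdisc m1 m2 m3 * w.2 ^+ 2.
Proof. by rewrite /qform /qdisc; ring. Qed.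

Lemma qform_definite m1 m2 m3 w : qdisc m1 m2 m3 < 0 -> w != (0, 0) ->
  0 < m1 * qform m1 m2 m3 w.
Proof.
case: w => w1 w2 hd hw.
have m1_neq0 : m1 != 0.
  by apply: contraTneq hd => ->; rewrite /qdisc !(mulr0, mul0r) subr0 -leNgt sqr_ge0.
have := qform_square m1 m2 m3 (w1, w2); rewrite /=.
have := sqr_ge0 (2%:R * m1 * w1 + m2 * w2).
have [w2_0|w2_neq0] := eqVneq w2 0; last first.
  have : 0 < w2 ^+ 2 by rewrite exprn_even_gt0.
  nra.
have : 0 < (m1 * w1) ^+ 2.
  rewrite exprn_even_gt0 // mulf_neq0 //.
  by move: hw; rewrite w2_0; apply: contraNneq => ->.
rewrite w2_0; nra.
Qed.

Lemma qform_anisotropic m1 m2 m3 w : qdisc m1 m2 m3 < 0 ->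
  qform m1 m2 m3 w = 0 -> w = (0, 0).
Proof.
move=> hd q0; apply/eqP/negP => /negP /(qform_definite hd).
by rewrite q0 mulr0 ltxx.
Qed.

Lemma qform_isotropic m1 m2 m3 : 0 <= qdisc m1 m2 m3 ->
  exists2 w, w != (0, 0) & qform m1 m2 m3 w = 0.
Proof.
move=> hd; have [m1_0|m1_neq0] := eqVneq m1 0.
  by exists (1, 0); rewrite ?xpair_eqE ?oner_eq0 // /qform m1_0 /=; ring.
set s := Num.sqrt (qdisc m1 m2 m3).
exists ((s - m2) / (2%:R * m1), 1); first by rewrite xpair_eqE oner_eq0 andbF.
apply: (mulfI (_ : 4%:R * m1 != 0)); first by rewrite mulf_neq0 // pnatr_eq0.
rewrite mulr0 qform_square /= -(sqr_sqrtr hd) -/s.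
have -> : 2%:R * m1 * ((s - m2) / (2%:R * m1)) + m2 * 1 = s by field.
by rewrite expr1n mulr1 subrr.
Qed.

Lemma qform_indefinite m1 m2 m3 : 0 < qdisc m1 m2 m3 -> exists w, 0 < qform m1 m2 m3 w.
Proof.
move=> hd; have [m1_neg|m1_pos|m1_0] := ltgtP m1 0.
- exists (- m2 / (2%:R * m1), 1).
  have := qform_square m1 m2 m3 (- m2 / (2%:R * m1), 1); rewrite /=.
  have -> : 2%:R * m1 * (- m2 / (2%:R * m1)) + m2 * 1 = 0 by field; exact: ltr0_neq0.
  nra.
- by exists (1, 0); rewrite /qform /=; lra.
- have m2_neq0 : m2 != 0.
    by apply: contraTneq hd => ->; rewrite /qdisc m1_0 !(mulr0, mul0r) expr0n subrr ltxx.
  exists ((1 - m3) / m2, 1); rewrite /qform m1_0 /=.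
  have -> : 0 * ((1 - m3) / m2) ^+ 2 + m2 * ((1 - m3) / m2) * 1 + m3 * 1 ^+ 2 = 1 by field.
  exact: ltr01.
Qed.

Lemma qform_semidefinite m1 m2 m3 : qdisc m1 m2 m3 = 0 ->
  (forall w, 0 <= qform m1 m2 m3 w) \/ (forall w, qform m1 m2 m3 w <= 0).
Proof.
move=> hd; have [m1_neg|m1_pos|m1_0] := ltgtP m1 0.
- right=> w; have := qform_square m1 m2 m3 w; rewrite hd mul0r subr0.
  have := sqr_ge0 (2%:R * m1 * w.1 + m2 * w.2); nra.
- left=> w; have := qform_square m1 m2 m3 w; rewrite hd mul0r subr0.
  have := sqr_ge0 (2%:R * m1 * w.1 + m2 * w.2); nra.
- have m2_0 : m2 = 0.
    by move: hd; rewrite /qdisc m1_0 mulr0 mul0r subr0 => /eqP; rewrite sqrf_eq0 => /eqP.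
  have qformE w : qform m1 m2 m3 w = m3 * w.2 ^+ 2 by rewrite /qform m1_0 m2_0; ring.
  have [m3_ge0|m3_lt0] := leP 0 m3.
    by left=> w; rewrite qformE mulr_ge0 // sqr_ge0.
  by right=> w; rewrite qformE; have := sqr_ge0 w.2; nra.
Qed.

Lemma qform_factor m1 m2 m3 : 0 < qdisc m1 m2 m3 ->
  exists p1 p2 r1 r2 : R, [/\ p1 * r2 - p2 * r1 != 0, m1 = p1 * r1,
     m2 = p1 * r2 + p2 * r1 & m3 = p2 * r2].
Proof.
move=> hd; have [m1_0|m1_neq0] := eqVneq m1 0.
  exists 0, 1, m2, m3; split; rewrite ?m1_0; try ring.
  rewrite mul0r sub0r mul1r oppr_eq0.
  by apply: contraTneq hd => m2_0; rewrite /qdisc m1_0 m2_0 !(mulr0, mul0r) expr0n subrr ltxx.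
set s := Num.sqrt (qdisc m1 m2 m3).
have s2 : s ^+ 2 = m2 ^+ 2 - 4%:R * m1 * m3 by rewrite sqr_sqrtr // ltW.
exists (2%:R * m1), (m2 - s), (1 / 2%:R), ((m2 + s) / (4%:R * m1)); split.
- have -> : 2%:R * m1 * ((m2 + s) / (4%:R * m1)) - (m2 - s) * (1 / 2%:R) = s by field.
  by rewrite gt_eqF // sqrtr_gt0.
- by field.
- by field.
- have -> : (m2 - s) * ((m2 + s) / (4%:R * m1)) = (m2 ^+ 2 - s ^+ 2) / (4%:R * m1) by field.
  by rewrite s2; field.
Qed.

Lemma linear_form_kernel p1 p2 w : (p1, p2) != (0, 0) -> p1 * w.1 + p2 * w.2 = 0 ->
  exists mu, w = (mu * p2, - (mu * p1)).
Proof.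
case: w => w1 w2 /= p_neq0 hw; have [p1_0|p1_neq0] := eqVneq p1 0.
  have p2_neq0 : p2 != 0 by move: p_neq0; rewrite p1_0 xpair_eqE eqxx.
  have w2_0 : w2 = 0.
    by move/eqP: hw; rewrite p1_0 mul0r add0r mulf_eq0 (negbTE p2_neq0) => /eqP.
  by exists (w1 / p2); rewrite w2_0 p1_0 mulr0 oppr0 divfK.
exists (- (w2 / p1)); congr (_, _); last by field.
have -> : w1 = (p1 * w1 + p2 * w2 - p2 * w2) / p1 by field.
by rewrite hw; field.
Qed.

(* On the kernel line of [(p1, p2)] the form [qform n1 n2 n3] is [lam] times a
   square, so its level [N > 0] is met in two points or in none. *)
Definition line_points (n1 n2 n3 N p1 p2 : R) : seq (R * R) :=
  let lam := qform n1 n2 n3 (p2, - p1) in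
  let t := Num.sqrt (N / lam) in
  if 0 < lam then [:: (t * p2, - (t * p1)); (- (t * p2), t * p1)] else [::].

Lemma size_line_points n1 n2 n3 N p1 p2 :
  size (line_points n1 n2 n3 N p1 p2) = (0 < qform n1 n2 n3 (p2, - p1))%R.*2.
Proof. by rewrite /line_points; case: ifP. Qed.

Lemma line_pointsP n1 n2 n3 N p1 p2 : 0 < N -> (p1, p2) != (0, 0) ->
  enumerates (fun w => p1 * w.1 + p2 * w.2 = 0 /\ qform n1 n2 n3 w = N)
             (line_points n1 n2 n3 N p1 p2).
Proof.
move=> N_gt0 p_neq0; rewrite /line_points.
set lam := qform n1 n2 n3 (p2, - p1); set t := Num.sqrt (N / lam).
have on_line mu : qform n1 n2 n3 (mu * p2, - (mu * p1)) = mu ^+ 2 * lam.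
  by rewrite /lam /qform /=; ring.
have [lam_gt0|lam_le0] := ltP 0 lam; last first.
  split=> // w; split=> // -[/(linear_form_kernel p_neq0) [mu ->]].
  rewrite on_line => hN; have := sqr_ge0 mu; nra.
have t_gt0 : 0 < t by rewrite sqrtr_gt0 divr_gt0.
have t2 : t ^+ 2 = N / lam by rewrite sqr_sqrtr // ltW // divr_gt0.
have tE : t ^+ 2 * lam = N by rewrite t2 divfK // gt_eqF.
have minus_t : (- (t * p2), t * p1) = (- t * p2, - (- t * p1)) by rewrite !mulNr opprK.
split.
  rewrite /= inE andbT; apply/eqP => -[e2 e1].
  have p1_0 : p1 = 0 by apply: (mulfI (lt0r_neq0 t_gt0)); lra.
  have p2_0 : p2 = 0 by apply: (mulfI (lt0r_neq0 t_gt0)); lra.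
  by move: p_neq0; rewrite p1_0 p2_0 eqxx.
move=> w; rewrite !inE; split.
  case=> /(linear_form_kernel p_neq0) [mu ->]; rewrite on_line => hN.
  have mu2 : mu ^+ 2 = t ^+ 2 by apply: (mulIf (lt0r_neq0 lam_gt0)); rewrite tE hN.
  have : (mu - t) * (mu + t) = 0 by rewrite -subr_sqr mu2 subrr.
  move/eqP; rewrite mulf_eq0 => /orP [] /eqP h.
    by rewrite (_ : mu = t) ?eqxx //; lra.
  by rewrite minus_t (_ : mu = - t) ?eqxx ?orbT //; lra.
by rewrite minus_t => /orP [] /eqP ->; rewrite on_line ?sqrrN tE; split=> //=; ring.
Qed.

Lemma double_sign_count (x y : R) : let n := ((0 < x)%R.*2 + (0 < y)%R.*2)%N in
  [/\ x * y < 0 -> n = 2%N, 0 < x * y -> n \in [:: 0; 4]%N & x * y <= 0 -> (n <= 2)%N].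
Proof. by case: (ltP 0 x) => hx; case: (ltP 0 y) => hy; split=> //= h; exfalso; nra. Qed.

Lemma qform_pair_fiber m1 m2 m3 n1 n2 n3 N : 0 < qdisc m1 m2 m3 -> 0 < N ->
  exists2 s, enumerates (fun w => qform m1 m2 m3 w = 0 /\ qform n1 n2 n3 w = N) s &
  exists lam lam', lam * lam' = qresultant m1 m2 m3 n1 n2 n3 /\
                   size s = ((0 < lam)%R.*2 + (0 < lam')%R.*2)%N.
Proof.
move=> hd N_gt0; have [p1 [p2 [r1 [r2 [det m1E m2E m3E]]]]] := qform_factor hd.
have p_neq0 : (p1, p2) != (0, 0).
  by apply: contraNneq det => -[-> ->]; rewrite !mul0r subrr.
have r_neq0 : (r1, r2) != (0, 0).
  by apply: contraNneq det => -[-> ->]; rewrite !mulr0 subrr.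
have [up Pp] := line_pointsP n1 n2 n3 N_gt0 p_neq0.
have [ur Pr] := line_pointsP n1 n2 n3 N_gt0 r_neq0.
have qformE w : qform m1 m2 m3 w = (p1 * w.1 + p2 * w.2) * (r1 * w.1 + r2 * w.2).
  by rewrite /qform m1E m2E m3E; ring.
exists (line_points n1 n2 n3 N p1 p2 ++ line_points n1 n2 n3 N r1 r2); last first.
  exists (qform n1 n2 n3 (p2, - p1)), (qform n1 n2 n3 (r2, - r1)).
  by rewrite size_cat !size_line_points /qform /qresultant m1E m2E m3E /=; split=> //; ring.
split=> [|w].
  rewrite cat_uniq up ur andbT /=; apply/hasPn => w /Pr [rw hN]; apply/negP => /Pp [pw _].
  suff w0 : w = (0, 0).
    by move: N_gt0; rewrite -hN w0 /qform /= !(mulr0, mul0r, expr0n, addr0) ltxx.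
  have w1_0 : w.1 * (p1 * r2 - p2 * r1) =
      r2 * (p1 * w.1 + p2 * w.2) - p2 * (r1 * w.1 + r2 * w.2) by ring.
  have w2_0 : w.2 * (p1 * r2 - p2 * r1) =
      p1 * (r1 * w.1 + r2 * w.2) - r1 * (p1 * w.1 + p2 * w.2) by ring.
  rewrite pw rw !mulr0 subrr -(mul0r (p1 * r2 - p2 * r1)) in w1_0 w2_0.
  by rewrite [w]surjective_pairing (mulIf det w1_0) (mulIf det w2_0).
rewrite mem_cat qformE; split.
  by case=> /eqP; rewrite mulf_eq0 => /orP [] /eqP pw hN; apply/orP; [left; apply/Pp | right; apply/Pr].
by case/orP => [/Pp | /Pr] [-> ->]; rewrite ?mul0r ?mulr0.
Qed.

Lemma sum_sqr_gt0 w : w != (0, 0) -> 0 < w.1 ^+ 2 + w.2 ^+ 2.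
Proof.
case: w => w1 w2 /= w_neq0; rewrite lt_def addr_ge0 ?sqr_ge0 // andbT.
apply: contraNneq w_neq0 => /eqP.
by rewrite paddr_eq0 ?sqr_ge0 // !sqrf_eq0 => /andP [/eqP -> /eqP ->].
Qed.

Lemma pair_eq_cross_dot (v z : R * R) : v != (0, 0) ->
  z = v <-> v.2 * z.1 - v.1 * z.2 = 0 /\ v.1 * z.1 + v.2 * z.2 = v.1 ^+ 2 + v.2 ^+ 2.
Proof.
move=> /sum_sqr_gt0 /lt0r_neq0; case: v z => v1 v2 [z1 z2] /= N_neq0.
split=> [[-> ->]|[cross dot]]; first by split; ring.
congr (_, _); apply: (mulIf N_neq0).
  have -> : z1 * (v1 ^+ 2 + v2 ^+ 2) = v1 * (v1 * z1 + v2 * z2) + v2 * (v2 * z1 - v1 * z2).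
    by ring.
  by rewrite dot cross; ring.
have -> : z2 * (v1 ^+ 2 + v2 ^+ 2) = v2 * (v1 * z1 + v2 * z2) - v1 * (v2 * z1 - v1 * z2).
  by ring.
by rewrite dot cross; ring.
Qed.

End BinaryQuadraticForms.

Section CubicGradient.
Variables (R : realType) (a b c d : R).
Implicit Types (v w : R * R).

Definition gradF w : R * R := (gradF1 a b c d w.1 w.2, gradF2 a b c d w.1 w.2).

Lemma gradF0 : gradF (0, 0) = (0, 0).
Proof. by rewrite /gradF /gradF1 /gradF2 /= !(expr0n, mulr0) !addr0. Qed.

Definition cubic_disc : R := 18%:R * a * b * c * d + b ^+ 2 * c ^+ 2 -
  (4%:R * a * c ^+ 3 + 4%:R * b ^+ 3 * d + 27%:R * a ^+ 2 * d ^+ 2).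

Local Notation h1 := (3%:R * a * c - b ^+ 2).
Local Notation h2 := (9%:R * a * d - b * c).
Local Notation h3 := (3%:R * b * d - c ^+ 2).

Definition hessQ w := qform h1 h2 h3 w.

Lemma qdisc_hessQ : qdisc h1 h2 h3 = - 3%:R * cubic_disc.
Proof. by rewrite /qdisc /cubic_disc; ring. Qed.

Lemma hessQ_lead_lt0 : 0 < cubic_disc -> h1 < 0.
Proof.
move=> hD; have [a0|a_neq0] := eqVneq a 0.
  rewrite a0 mulr0 mul0r sub0r oppr_lt0 lt_def sqr_ge0 andbT sqrf_eq0.
  by apply: contraTneq hD => b0; rewrite -leNgt /cubic_disc a0 b0; lra.
have key : 27%:R * a ^+ 2 * cubic_disc =
    - 4%:R * h1 ^+ 3 - (2%:R * b ^+ 3 - 9%:R * a * b * c + 27%:R * a ^+ 2 * d) ^+ 2.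
  by rewrite /cubic_disc; ring.
have aD_gt0 : 0 < a ^+ 2 * cubic_disc by rewrite mulr_gt0 // exprn_even_gt0.
have sq_ge0 := sqr_ge0 (2%:R * b ^+ 3 - 9%:R * a * b * c + 27%:R * a ^+ 2 * d).
rewrite ltNge; apply/negP => /(exprn_ge0 3); nra.
Qed.

Lemma hessQ_lt0 w : 0 < cubic_disc -> w != (0, 0) -> hessQ w < 0.
Proof.
move=> hD w_neq0; have h1_lt0 := hessQ_lead_lt0 hD.
have : qdisc h1 h2 h3 < 0 by rewrite qdisc_hessQ; lra.
by move/qform_definite/(_ w_neq0); rewrite -/(hessQ w); nra.
Qed.

Lemma hessQ_anisotropicP : (forall w, hessQ w = 0 -> w = (0, 0)) <-> 0 < cubic_disc.
Proof.
split=> [aniso|hD w]; last by apply: qform_anisotropic; rewrite qdisc_hessQ; lra.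
rewrite ltNge; apply/negP => hD.
have [|w w_neq0 /aniso w0] := @qform_isotropic _ h1 h2 h3; first by rewrite qdisc_hessQ; lra.
by rewrite w0 eqxx in w_neq0.
Qed.

Lemma hessQ_indefinite : cubic_disc < 0 -> exists w, 0 < hessQ w.
Proof. by move=> hD; apply: qform_indefinite; rewrite qdisc_hessQ; lra. Qed.

Lemma hessQ_rot_gradF w : hessQ (- (gradF w).2, (gradF w).1) = - hessQ w ^+ 2.
Proof. by rewrite /hessQ /qform /gradF /gradF1 /gradF2 /=; ring. Qed.

Lemma gradF_fiber v : hessQ (- v.2, v.1) < 0 ->
  exists2 s, enumerates (fun w => gradF w = v) s &
  [/\ 0 < cubic_disc -> size s = 2%N, cubic_disc < 0 -> size s \in [:: 0; 4]%N
    & 0 <= cubic_disc -> (size s <= 2)%N].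
Proof.
case: v => v1 v2 /= hv; set N := v1 ^+ 2 + v2 ^+ 2.
have v_neq0 : (v1, v2) != (0, 0).
  by apply: contraTneq hv => -[-> ->]; rewrite oppr0 /hessQ qform0 ltxx.
have N_gt0 : 0 < N := sum_sqr_gt0 v_neq0.
pose k1 := 3%:R * a * v2 - b * v1; pose k2 := 2%:R * (b * v2 - c * v1).
pose k3 := c * v2 - 3%:R * d * v1.
pose l1 := 3%:R * a * v1 + b * v2; pose l2 := 2%:R * (b * v1 + c * v2).
pose l3 := c * v1 + 3%:R * d * v2.
have k_disc : qdisc k1 k2 k3 = - 4%:R * hessQ (- v2, v1).
  by rewrite /qdisc /hessQ /qform /k1 /k2 /k3 /=; ring.
have k_disc_gt0 : 0 < qdisc k1 k2 k3 by rewrite k_disc; nra.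
have fiberE w : gradF w = (v1, v2) <-> qform k1 k2 k3 w = 0 /\ qform l1 l2 l3 w = N.
  have -> : qform k1 k2 k3 w = v2 * (gradF w).1 - v1 * (gradF w).2.
    by rewrite /qform /gradF /gradF1 /gradF2 /k1 /k2 /k3 /=; ring.
  have -> : qform l1 l2 l3 w = v1 * (gradF w).1 + v2 * (gradF w).2.
    by rewrite /qform /gradF /gradF1 /gradF2 /l1 /l2 /l3 /=; ring.
  exact: pair_eq_cross_dot.
have [s [us Ps] [lam [lam' [prodE sizeE]]]] := qform_pair_fiber l1 l2 l3 k_disc_gt0 N_gt0.
have resE : qresultant k1 k2 k3 l1 l2 l3 = - 3%:R * cubic_disc * N ^+ 2.
  by rewrite /qresultant /cubic_disc /k1 /k2 /k3 /l1 /l2 /l3 /N; ring.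
have N2_gt0 : 0 < N ^+ 2 by rewrite exprn_gt0.
exists s; first by split=> // w; split=> [/fiberE/Ps | /Ps/fiberE].
have [opp same nonpos] := double_sign_count lam lam'.
by rewrite sizeE; split=> hD; [apply: opp | apply: same | apply: nonpos]; rewrite prodE resE; nra.
Qed.

Lemma gradF_not_surjective : cubic_disc <= 0 -> exists v, forall w, gradF w != v.
Proof.
move=> hD; have [|[u1 u2] u_neq0 hu] := @qform_isotropic _ h1 h2 h3.
  by rewrite qdisc_hessQ; lra.
pose l1 := 3%:R * a * u1 + b * u2; pose l2 := 2%:R * (b * u1 + c * u2).
pose l3 := c * u1 + 3%:R * d * u2.
have dotE w : u1 * (gradF w).1 + u2 * (gradF w).2 = qform l1 l2 l3 w.
  by rewrite /qform /gradF /gradF1 /gradF2 /l1 /l2 /l3 /=; ring.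
have u_gt0 : 0 < u1 ^+ 2 + u2 ^+ 2 := sum_sqr_gt0 u_neq0.
have l_disc : qdisc l1 l2 l3 = 0.
  by rewrite -[RHS](mulr0 (- 4%:R)) -hu /hessQ /qform /qdisc /l1 /l2 /l3 /=; ring.
have [l_ge0|l_le0] := qform_semidefinite l_disc.
- exists (- u1, - u2) => w; apply/eqP => Gw.
  by have := l_ge0 w; rewrite -dotE Gw /=; nra.
- exists (u1, u2) => w; apply/eqP => Gw.
  by have := l_le0 w; rewrite -dotE Gw /=; nra.
Qed.

End CubicGradient.

Lemma derive_quadratic (R : realFieldType) (V W : normedModType R) (f : V -> W)
    (x v : V) (A B : W) :
  (forall h : R, f (h *: v + x) = f x + h *: A + h ^+ 2 *: B) -> 'D_v f x = A.
Proof.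
move=> fE; apply: cvg_lim => //.
have quotE : {near 0^', (fun h : R => A + h *: B) =1
                        (fun h => h^-1 *: ((f \o shift x) (h *: v) - f x))}.
  near=> h; have h_neq0 : h != 0 by near: h; exact: nbhs_dnbhs_neq.
  rewrite /= /shift fE.
  have -> : f x + h *: A + h ^+ 2 *: B - f x = h *: (A + h *: B).
    by rewrite scalerDr scalerA -expr2 addrAC [f x + _ - _]addrAC subrr add0r.
  by rewrite scalerA mulVf // scale1r.
apply: cvg_trans (near_eq_cvg quotE) _.
have lim0 : (fun h : R => A + h *: B) @ (0 : R) --> (A + (0 : R) *: B : W).
  exact: (cvgD (cvg_cst A) (cvgZ cvg_id (cvg_cst B))).
rewrite scale0r addr0 in lim0.
exact: cvg_within_filter lim0.
Unshelve. all: by end_near. Qed.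

Section PsiFibers.
Variables (R : realType) (a b c d : R).
Local Notation Psi := (Psi a b c d).
Local Notation gradF := (gradF a b c d).
Local Notation hessQ := (hessQ a b c d).
Implicit Types (x y : 'rV[R]_4) (w : R * R).

Lemma vec4_eta x : x = vec4 (x 0 i0) (x 0 i1) (x 0 i2) (x 0 i3).
Proof.
apply/rowP => i; rewrite mxE.
by case: i => [[|[|[|[|//]]]] i_lt4] /=; congr (x 0 _); apply/val_inj.
Qed.

Lemma vec4_inj (x1 x2 x3 x4 y1 y2 y3 y4 : R) :
  vec4 x1 x2 x3 x4 = vec4 y1 y2 y3 y4 :> 'rV[R]_4 -> [/\ x1 = y1, x2 = y2, x3 = y3 & x4 = y4].
Proof.
move=> e; have coord i := congr1 (fun z : 'rV[R]_4 => z 0 i) e.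
by split; [move: (coord i0) | move: (coord i1) | move: (coord i2) | move: (coord i3)];
  rewrite !mxE.
Qed.

Definition dPsi (x v : 'rV[R]_4) : 'rV[R]_4 :=
  let q1 := x 0 i0 in let q2 := x 0 i1 in let w1 := x 0 i2 in let w2 := x 0 i3 in
  let e1 := v 0 i0 in let e2 := v 0 i1 in let f1 := v 0 i2 in let f2 := v 0 i3 in
  vec4 (e1 + f1) (e2 + f2)
   (hessF11 a b c d q1 q2 * (e1 + f1) + hessF12 a b c d q1 q2 * (e2 + f2)
     + hessF11 a b c d e1 e2 * w1 + hessF12 a b c d e1 e2 * w2)
   (hessF12 a b c d q1 q2 * (e1 + f1) + hessF22 a b c d q1 q2 * (e2 + f2)
     + hessF12 a b c d e1 e2 * w1 + hessF22 a b c d e1 e2 * w2).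

Lemma Psi_expand x (v : 'rV[R]_4) : exists B, forall h : R,
  Psi (h *: v + x) = Psi x + h *: dPsi x v + h ^+ 2 *: B.
Proof.
exists (vec4 0 0
   (gradF1 a b c d (v 0 i0) (v 0 i1) + hessF11 a b c d (v 0 i0) (v 0 i1) * v 0 i2
     + hessF12 a b c d (v 0 i0) (v 0 i1) * v 0 i3)
   (gradF2 a b c d (v 0 i0) (v 0 i1) + hessF12 a b c d (v 0 i0) (v 0 i1) * v 0 i2
     + hessF22 a b c d (v 0 i0) (v 0 i1) * v 0 i3)).
move=> h; apply/rowP => i; rewrite !mxE.
case: i => [[|[|[|[|//]]]] i_lt4] /=; rewrite ?mxE /=;
  rewrite /gradF1 /gradF2 /hessF11 /hessF12 /hessF22; ring.
Qed.

(* In blocks the Jacobian is [[1, 1], [hessF q + hessF w, hessF q]], whose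
   determinant is det (hessF w). *)
Lemma det_jacobian_Psi x : \det (Defs.jacobian Psi x) = 4%:R * hessQ (x 0 i2, x 0 i3).
Proof.
have D e : 'D_e Psi x = dPsi x e.
  by have [B PsiE] := Psi_expand x e; exact: derive_quadratic PsiE.
rewrite /Defs.jacobian.
do 3 rewrite !(expand_det_row _ ord0) !big_ord_recl !big_ord0 /cofactor.
by rewrite !det_mx11 !mxE /= !D /dPsi !mxE /= /hessQ /qform /hessF11 /hessF12 /hessF22 /=; ring.
Qed.

Lemma critical_pointE x : critical_point Psi x <-> hessQ (x 0 i2, x 0 i3) = 0.
Proof.
rewrite /critical_point det_jacobian_Psi; split=> [/eqP|->]; last by rewrite mulr0.
by rewrite mulf_eq0 pnatr_eq0 => /eqP.
Qed.

Lemma PsiE x : Psi x = vec4 (x 0 i0 + x 0 i2) (x 0 i1 + x 0 i3)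
  (gradF1 a b c d (x 0 i0 + x 0 i2) (x 0 i1 + x 0 i3) - (gradF (x 0 i2, x 0 i3)).1)
  (gradF2 a b c d (x 0 i0 + x 0 i2) (x 0 i1 + x 0 i3) - (gradF (x 0 i2, x 0 i3)).2).
Proof.
rewrite /Psi /gradF /gradF1 /gradF2 /hessF11 /hessF12 /hessF22 /=.
by congr vec4; ring.
Qed.

Definition fiber_pt y w : 'rV[R]_4 := vec4 (y 0 i0 - w.1) (y 0 i1 - w.2) w.1 w.2.
Definition fiber_target y : R * R :=
  (gradF1 a b c d (y 0 i0) (y 0 i1) - y 0 i2, gradF2 a b c d (y 0 i0) (y 0 i1) - y 0 i3).

Lemma fiber_pt_inj y : injective (fiber_pt y).
Proof. by move=> [w1 w2] [z1 z2] /vec4_inj [_ _ /= -> ->]. Qed.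

Lemma fiber_target_vec4 (v : R * R) : fiber_target (vec4 0 0 (- v.1) (- v.2)) = v.
Proof. by case: v => v1 v2; rewrite /fiber_target !mxE /gradF1 /gradF2 /=; congr pair; ring. Qed.

Lemma PsiP x y : Psi x = y <-> exists2 w, x = fiber_pt y w & gradF w = fiber_target y.
Proof.
split=> [<-|[w -> Gw]].
  exists (x 0 i2, x 0 i3).
    by rewrite {1}[x]vec4_eta /fiber_pt PsiE !mxE /=; congr vec4; ring.
  by rewrite /fiber_target PsiE !mxE /=; congr pair; ring.
rewrite PsiE [RHS]vec4_eta /fiber_pt !mxE /= !subrK.
move: Gw; rewrite /gradF /fiber_target /= => -[-> ->].
by congr vec4; ring.
Qed.

Lemma critical_fiber_pt y w : critical_point Psi (fiber_pt y w) <-> hessQ w = 0.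
Proof. by rewrite critical_pointE /fiber_pt !mxE -surjective_pairing. Qed.

Lemma regular_valueE y :
  regular_value Psi y <-> forall w, gradF w = fiber_target y -> hessQ w != 0.
Proof.
split=> [reg w Gw|reg x /PsiP [w -> Gw] /critical_fiber_pt].
  apply/eqP => Q0; apply: (reg (fiber_pt y w)); first by apply/PsiP; exists w.
  exact/critical_fiber_pt.
by apply/eqP; exact: reg.
Qed.

Lemma has_multiplicityE y s : enumerates (fun w => gradF w = fiber_target y) s ->
  forall n, has_multiplicity Psi y n <-> n = size s.
Proof.
move=> [us Ps]; have fiber_s : enumerates (fun x => Psi x = y) (map (fiber_pt y) s).
  split=> [|x]; first by rewrite map_inj_uniq //; exact: fiber_pt_inj.
  rewrite PsiP; split=> [[w -> /Ps w_s]|/mapP [w /Ps Gw ->]]; last by exists w.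
  by rewrite mem_map //; exact: fiber_pt_inj.
move=> n; split=> [[t [ut <- Pt]]|->].
  by rewrite -(size_map (fiber_pt y) s); exact: (enumerates_size (conj ut Pt) fiber_s).
by exists (map (fiber_pt y) s); case: fiber_s => ? ?; rewrite size_map.
Qed.

Lemma has_multiplicity_gt0 y n : has_multiplicity Psi y n -> (0 < n)%N ->
  exists w, gradF w = fiber_target y.
Proof.
move=> mult n_gt0; apply/not_existsP => no_sol.
have empty : enumerates (fun w => gradF w = fiber_target y) [::].
  by split=> // w; split=> // /no_sol.
by move: n_gt0; rewrite ((has_multiplicityE empty n).1 mult).
Qed.

Lemma empty_fiber_regular y : (forall w, gradF w != fiber_target y) ->
  regular_value Psi y /\ has_multiplicity Psi y 0.
Proof.
move=> no_sol; have empty : enumerates (fun w => gradF w = fiber_target y) [::].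
  by split=> // w; split=> // /eqP; rewrite (negbTE (no_sol w)).
split; last exact/(has_multiplicityE empty).
by apply/regular_valueE => w /eqP; rewrite (negbTE (no_sol w)).
Qed.

Lemma regular_fiber y w0 : regular_value Psi y -> gradF w0 = fiber_target y ->
  exists2 s, enumerates (fun w => gradF w = fiber_target y) s &
  [/\ 0 < cubic_disc a b c d -> size s = 2%N,
      cubic_disc a b c d < 0 -> size s \in [:: 0; 4]%N
    & 0 <= cubic_disc a b c d -> (size s <= 2)%N].
Proof.
move=> /regular_valueE reg Gw0; apply: gradF_fiber.
rewrite -Gw0 hessQ_rot_gradF oppr_lt0 exprn_even_gt0 //.
exact: reg.
Qed.

End PsiFibers.

Section PsiMultiplicities.
Variables (R : realType) (a b c d : R).
Local Notation Psi := (Psi a b c d).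
Local Notation gradF := (gradF a b c d).
Local Notation hessQ := (hessQ a b c d).
Local Notation disc := (cubic_disc a b c d).
Local Notation fiber_target := (fiber_target a b c d).
Implicit Types (x y : 'rV[R]_4) (w : R * R).

Lemma critical_set_PsiP : critical_set Psi = @zero_section R <-> 0 < disc.
Proof.
rewrite -hessQ_anisotropicP; split=> [crit w Q0|aniso].
  have : zero_section (vec4 0 0 w.1 w.2).
    by rewrite -crit /critical_set /=; apply/critical_pointE; rewrite !mxE -surjective_pairing.
  by rewrite /zero_section /= !mxE /= => -[w1_0 w2_0]; rewrite [w]surjective_pairing w1_0 w2_0.
apply/seteqP; split=> x /=.
  by move=> /critical_pointE /aniso [x2_0 x3_0]; split.
by case=> x2_0 x3_0; apply/critical_pointE; rewrite x2_0 x3_0 /hessQ /qform /=; ring.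
Qed.

Lemma Psi_zero_section : Psi @` @zero_section R = lagL a b c d.
Proof.
apply/seteqP; split=> [_ [x [x2_0 x3_0] <-]|_ [q1 _ [q2 _ <-]]].
  exists (x 0 i0) => //; exists (x 0 i1) => //.
  by rewrite /Psi x2_0 x3_0; congr vec4; ring.
exists (vec4 q1 q2 0 0); first by rewrite /zero_section /= !mxE.
by rewrite /Psi !mxE /=; congr vec4; ring.
Qed.

Lemma exists_empty_fiber : disc <= 0 -> exists y, forall w, gradF w != fiber_target y.
Proof.
move=> /gradF_not_surjective [v no_sol]; exists (vec4 0 0 (- v.1) (- v.2)).
by rewrite fiber_target_vec4.
Qed.

Lemma regular_multiplicity2P :
  (forall y, regular_value Psi y -> has_multiplicity Psi y 2) <-> 0 < disc.
Proof.
split=> [mult2|hD y reg].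
  rewrite ltNge; apply/negP => /exists_empty_fiber [y no_sol].
  have [reg _] := empty_fiber_regular no_sol.
  have [w Gw] := has_multiplicity_gt0 (mult2 y reg) isT.
  by have := no_sol w; rewrite Gw eqxx.
move/regular_valueE: reg; case E : (fiber_target y) => [v1 v2] reg.
have v_neq0 : (- v2, v1) != (0, 0).
  apply/eqP => -[/eqP]; rewrite oppr_eq0 => /eqP v2_0 v1_0.
  by have := reg (0, 0); rewrite v1_0 v2_0 gradF0 /hessQ qform0 eqxx => /(_ erefl).
have [s fiber_s [size2 _ _]] := @gradF_fiber _ a b c d (v1, v2) (hessQ_lt0 hD v_neq0).
by rewrite -E in fiber_s; apply/(has_multiplicityE fiber_s); rewrite size2.
Qed.

Lemma regular_multiplicities04P :
  regular_multiplicities Psi = [set 0%N; 4%N] <-> disc < 0.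
Proof.
split=> [mults|hD].
  rewrite ltNge; apply/negP => hD.
  have [y [reg mult4]] : regular_multiplicities Psi 4%N by rewrite mults; right.
  have [w0 Gw0] := has_multiplicity_gt0 mult4 isT.
  have [s fiber_s [_ _ size_le2]] := regular_fiber reg Gw0.
  by move: (size_le2 hD); rewrite -((has_multiplicityE fiber_s _).1 mult4).
apply/seteqP; split=> [n [y [reg mult]]|_ [->|->]].
- have [[w0 Gw0]|no_sol] := pselect (exists w, gradF w = fiber_target y); last first.
    case: n mult => [|n] mult; first by left.
    by case: no_sol; apply: has_multiplicity_gt0 mult _.
  have [s fiber_s [_ size04 _]] := regular_fiber reg Gw0.
  move: (size04 hD); rewrite -((has_multiplicityE fiber_s n).1 mult) !inE.
  by case/orP => /eqP ->; [left | right].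
- have [y no_sol] := exists_empty_fiber (ltW hD).
  by exists y; exact: empty_fiber_regular.
have [w0 Qw0_gt0] := hessQ_indefinite hD.
pose y := vec4 0 0 (- (gradF w0).1) (- (gradF w0).2).
have Gw0 : gradF w0 = fiber_target y by rewrite fiber_target_vec4.
have reg : regular_value Psi y.
  apply/regular_valueE => w; rewrite -Gw0 => Gw; apply/eqP => Qw_0.
  have := hessQ_rot_gradF a b c d w; rewrite Gw hessQ_rot_gradF Qw_0 expr0n oppr0 /=.
  by move/eqP; rewrite oppr_eq0 sqrf_eq0 (gt_eqF Qw0_gt0).
have [s fiber_s [_ size04 _]] := regular_fiber reg Gw0.
exists y; split=> //; apply/(has_multiplicityE fiber_s).
have w0_s : w0 \in s by apply/fiber_s.2.
by move: (size04 hD); rewrite !inE => /orP [/eqP/size0nil s0|/eqP //]; rewrite s0 in w0_s.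
Qed.

End PsiMultiplicities.

Theorem mainTheorem4 (R : realType) (a b c d : R) :
  let lhs := 18%:R * a * b * c * d + b ^+ 2 * c ^+ 2 in
  let rhs := 4%:R * a * c ^+ 3 + 4%:R * b ^+ 3 * d + 27%:R * a ^+ 2 * d ^+ 2 in
  let Delta := critical_set (Psi a b c d) in
  let Sigma := Psi a b c d @` Delta in
  [/\ (rhs < lhs <-> Delta = @zero_section R),
      (Delta = @zero_section R <->
         forall y, regular_value (Psi a b c d) y -> has_multiplicity (Psi a b c d) y 2),
      (Delta = @zero_section R -> Sigma = lagL a b c d),
      (lhs < rhs <-> regular_multiplicities (Psi a b c d) = [set 0%N; 4%N])
    & (lhs < rhs -> Delta <> @zero_section R)].
Proof.
move=> lhs rhs Delta Sigma.
have pos : rhs < lhs <-> 0 < cubic_disc a b c d by rewrite subr_gt0.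
have neg : lhs < rhs <-> cubic_disc a b c d < 0 by rewrite subr_lt0.
have crit : Delta = @zero_section R <-> 0 < cubic_disc a b c d := critical_set_PsiP a b c d.
have mult2 := regular_multiplicity2P a b c d.
have mult04 := regular_multiplicities04P a b c d.
split.
- by split=> [/pos/crit|/crit/pos].
- by split=> [/crit/mult2|/mult2/crit].
- by move=> E; rewrite /Sigma E; exact: Psi_zero_section.
- by split=> [/neg/mult04|/mult04/neg].
- by move=> /neg/ltW; rewrite leNgt => /negP not_pos /crit.
Qed.
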